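(* Let $d\ge2$ and let $\mathcal{H}$ be a $d$-uniform simple hypergraph such that any two distinct edges $S,S'$ with $S\cap S'\neq\emptyset$ satisfy $|S\cap S'|=d-1$. Let $x$ be a simplicial vertex of $\mathcal{H}$, $S=\{x,x_2,\dots,x_d\}$ an edge containing $x$, and $N(S)=\{z_1,\dots,z_t\}$ with $z_1,\dots,z_t$ pairwise distinct. Let $S_1,\dots,S_t$ be distinct edges of $\mathcal{H}$ with $S_\ell\setminus S=\{z_\ell\}$ and $x\notin S_\ell$ for all $1\le\ell\le t$, and let $\mathcal{H}_2$ be the induced subhypergraph of $\mathcal{H}$ on $V(\mathcal{H})\setminus\{x,x_2,\dots,x_d,z_1,\dots,z_t\}$. If $\mathcal{S}'$ is a self disjoint set in $\mathcal{H}_2$ of type $(i-1-t,\,j-d-t)$, then $\mathcal{S}=\mathcal{S}'\cup\{S,S_1,\dots,S_t\}$ is a self disjoint set in $\mathcal{H}$ of type $(i,j)$.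
   Context: A simple hypergraph $\mathcal{H}$ is a set $\mathcal{E}(\mathcal{H})$ of subsets (edges) of a finite vertex set $V(\mathcal{H})$, each of cardinality at least $2$, none contained in another; $d$-uniform means all edges have cardinality $d$. For $W\subseteq V(\mathcal{H})$, the induced subhypergraph $\mathcal{H}_W$ has vertex set $W$ and edges the edges of $\mathcal{H}$ contained in $W$. For an edge $S$, $N(S)=\bigcup_{E\in\mathcal{E}(\mathcal{H}),\,E\cap S\neq\emptyset}(E\setminus S)$. For a vertex $x$, $N[x]=\{x\}\cup\{y:\{x,y\}\subseteq E\text{ for some edge }E\}$; $x$ is simplicial if every $d$-subset of $N[x]$ is an edge. For a family $\mathcal{S}=\{T_1,\dots,T_i\}$ of distinct edges, its type is $(i,j)$ with $j=|\bigcup_\ell T_\ell|$. $\mathcal{S}$ is an induced matching if the $T_\ell$ are pairwise disjoint and no edge outside $\mathcal{S}$ is contained in $\bigcup_\ell T_\ell$; a self disjoint set if (i) for all $k$, $T_k\nsubseteq\bigcup_{\ell\neq k}T_\ell$, and (ii) there is an induced matching $\mathcal{S}_0\subseteq\mathcal{S}$ such that for every $T_\ell\in\mathcal{S}\setminus\mathcal{S}_0$ there is $T'\in\mathcal{S}_0$ with $|T_\ell\setminus T'|=1$ (all notions relative to the ambient hypergraph, $\mathcal{H}_2$ or $\mathcal{H}$). *)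

From mathcomp Require Import all_boot.
Set Implicit Arguments. Unset Strict Implicit. Unset Printing Implicit Defensive.

Section Hyper.
Variable T : finType.

Definition is_hypergraph (V : {set T}) (E : {set {set T}}) : Prop :=
  forall e, e \in E -> e \subset V.

Definition simple_hypergraph (V : {set T}) (E : {set {set T}}) : Prop :=
  is_hypergraph V E /\
  (forall e, e \in E -> 2 <= #|e|) /\
  (forall e e', e \in E -> e' \in E -> e \subset e' -> e = e').

Definition uniform (d : nat) (E : {set {set T}}) : Prop :=
  forall e, e \in E -> #|e| = d.

(* induced subhypergraph on W: vertex set W, edges of E contained in W *)
Definition induced_edges (E : {set {set T}}) (W : {set T}) : {set {set T}} :=
  [set e in E | e \subset W].

Definition nbhd_edge (E : {set {set T}}) (S : {set T}) : {set T} :=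
  \bigcup_(e in E | ~~ [disjoint e & S]) (e :\: S).

Definition closed_nbhd (E : {set {set T}}) (x : T) : {set T} :=
  x |: [set y | [exists e in E, (x \in e) && (y \in e)]].

Definition simplicial (d : nat) (E : {set {set T}}) (x : T) : Prop :=
  forall A : {set T}, A \subset closed_nbhd E x -> #|A| = d -> A \in E.

Definition has_type (F : {set {set T}}) (i j : nat) : Prop :=
  #|F| = i /\ #|cover F| = j.

Definition induced_matching (E : {set {set T}}) (F : {set {set T}}) : Prop :=
  F \subset E /\ trivIset F /\
  (forall e, e \in E -> e \subset cover F -> e \in F).

Definition self_disjoint (E : {set {set T}}) (F : {set {set T}}) : Prop :=
  F \subset E /\
  (forall Tk, Tk \in F -> ~~ (Tk \subset cover (F :\ Tk))) /\
  (exists F0 : {set {set T}}, F0 \subset F /\ induced_matching E F0 /\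
     forall Tl, Tl \in F :\: F0 -> exists2 T', T' \in F0 & #|Tl :\: T'| = 1).

End Hyper.

(* The edges S, S_1, ..., S_t all lie in S ∪ N(S), which is disjoint from the
   vertex set of H_2; hence S' and {S, S_1, ..., S_t} have disjoint covers and
   their types add up.  The vertices x, z_1, ..., z_t are private to S, S_1, ...,
   S_t, which gives condition (i).  For (ii), add S to the induced matching S'_0
   of S': an edge of H inside S ∪ cover S'_0 meeting S has all its vertices
   outside S in N(S), so it lies inside S and equals S by simplicity; any other
   such edge is an edge of H_2 and belongs to S'_0.  Finally each S_l differs
   from S in one vertex.  Neither the simpliciality of x, nor the intersection
   condition on edges, nor the equality N(S) = {z_1, ..., z_t} is needed. *)

From mathcomp Require Import all_boot.
Set Implicit Arguments. Unset Strict Implicit. Unset Printing Implicit Defensive.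

Lemma cardsU_disjoint (T : finType) (A B : {set T}) :
  [disjoint A & B] -> #|A :|: B| = #|A| + #|B|.
Proof. by move=> /disjoint_setI0 AB0; rewrite cardsU AB0 cards0 subn0. Qed.

Section Families.
Variable T : finType.
Implicit Types (F G : {set {set T}}) (B : {set T}).

Definition irredundant F := forall B, B \in F -> ~~ (B \subset cover (F :\ B)).

Lemma irredundant_of_private F :
  (forall B, B \in F -> exists2 y, y \in B & forall B', B' \in F -> y \in B' -> B' = B) ->
  irredundant F.
Proof.
move=> private B BF; have [y yB yonly] := private B BF.
apply/negP => /subsetP/(_ y yB)/bigcupP[B' /setD1P[B'B B'F] yB'].
by rewrite (yonly B' B'F yB') eqxx in B'B.
Qed.

Lemma irredundant_set0 F : irredundant F -> set0 \notin F.
Proof. by move=> irrF; apply/negP => /irrF; rewrite sub0set. Qed.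

Lemma irredundantU F G :
  irredundant F -> irredundant G -> [disjoint cover F & cover G] ->
  irredundant (F :|: G).
Proof.
suff left_part F' G' : irredundant F' -> [disjoint cover F' & cover G'] ->
    forall B, B \in F' -> ~~ (B \subset cover ((F' :|: G') :\ B)).
  move=> irrF irrG disFG B /setUP[BF | BG]; first exact: left_part.
  by rewrite setUC; apply: left_part; rewrite 1?disjoint_sym.
move=> irrF disFG B BF; apply: contra (irrF B BF) => /subsetP Bcov.
apply/subsetP => y yB; have yF : y \in cover F' by apply/bigcupP; exists B.
have /bigcupP[B' /setD1P[B'B /setUP[B'F | B'G]] yB'] := Bcov y yB.
  by apply/bigcupP; exists B'; rewrite ?inE ?B'B.
have yG : y \in cover G' by apply/bigcupP; exists B'.
by rewrite (disjointFr disFG yF) in yG.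
Qed.

Lemma cover_setU1 B F : cover (B |: F) = B :|: cover F.
Proof. by rewrite /cover bigcup_setU big_set1. Qed.

Lemma meets_of_card_setD B S : #|B :\: S| < #|B| -> ~~ [disjoint B & S].
Proof. by apply: contraL => /setDidPl ->; rewrite ltnn. Qed.

Lemma disjoint_of_cover F G :
  set0 \notin G -> [disjoint cover F & cover G] -> [disjoint F & G].
Proof.
move=> G0 disFG; apply/pred0P => B /=; apply/negP => /andP[BF BG].
have /set0Pn[y yB] : B != set0 by apply: contraNneq G0 => <-.
have yF : y \in cover F by apply/bigcupP; exists B.
have yG : y \in cover G by apply/bigcupP; exists B.
by rewrite (disjointFr disFG yF) in yG.
Qed.

Lemma has_typeU F G i j i' j' :
  has_type F i j -> has_type G i' j' -> [disjoint F & G] ->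
  [disjoint cover F & cover G] -> has_type (F :|: G) (i + i') (j + j').
Proof.
move=> [cardF coverF] [cardG coverG] disFG dis_cover; split.
  by rewrite cardsU_disjoint // cardF cardG.
by rewrite /cover bigcup_setU cardsU_disjoint // coverF coverG.
Qed.

End Families.

Section Gluing.
Variables (T : finType) (V : {set T}) (E : {set {set T}}) (S W : {set T}).
Hypotheses (simpleE : simple_hypergraph V E) (SE : S \in E).
Hypothesis disW : [disjoint W & S :|: nbhd_edge E S].

Lemma induced_edges_sub : induced_edges E W \subset E.
Proof. by apply/subsetP => e; rewrite inE => /andP[]. Qed.

Lemma cover_induced_edges (F : {set {set T}}) :
  F \subset induced_edges E W -> cover F \subset W.
Proof.
by move=> FW; apply/bigcupsP => e /(subsetP FW); rewrite inE => /andP[].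
Qed.

Lemma edge_sub_nbhd e :
  e \in E -> ~~ [disjoint e & S] -> e \subset S :|: nbhd_edge E S.
Proof.
move=> eE meet; apply/subsetP => y ye; rewrite inE.
case: (boolP (y \in S)) => //= yS.
by apply/bigcupP; exists e; rewrite ?eE ?meet // inE yS.
Qed.

Lemma induced_matching_setU1 (F0 : {set {set T}}) :
  induced_matching (induced_edges E W) F0 -> induced_matching E (S |: F0).
Proof.
have [_ [card_edge antichain]] := simpleE.
move=> [F0W [triv0 ind0]].
have F0E : F0 \subset E := subset_trans F0W induced_edges_sub.
have cover0W := cover_induced_edges F0W.
have disS0 : [disjoint S & cover F0].
  by rewrite disjoint_sym (disjointWl cover0W) // (disjointWr (subsetUl _ _) disW).
split; first by rewrite subUset sub1set SE F0E.
split.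
  apply: (trivIsetU1 _ triv0 _).1 => [B B0 | ].
    exact: disjointWr (bigcup_sup B B0) disS0.
  by apply/negP => /(subsetP F0E)/card_edge; rewrite cards0.
move=> e eE; rewrite cover_setU1 => esub.
case: (boolP [disjoint e & S]) => [dis | meet].
  have ecov : e \subset cover F0.
    apply/subsetP => y ye; case/setUP: (subsetP esub y ye) => // yS.
    by rewrite (disjointFr dis ye) in yS.
  by rewrite setU1r // ind0 // inE eE (subset_trans ecov cover0W).
have eS : e \subset S.
  apply/subsetP => y ye; apply: contraT => yS.
  have y0 : y \in cover F0 by case/setUP: (subsetP esub y ye) => // /(negP yS).
  have yN := subsetP (edge_sub_nbhd eE meet) y ye.
  by rewrite (disjointFr disW (subsetP cover0W y y0)) in yN.
by rewrite (antichain e S eE SE eS) setU11.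
Qed.

Variable A : {set {set T}}.
Hypotheses (AE : A \subset E) (A_S : forall B, B \in A -> #|B :\: S| = 1).

Lemma cover_setU1_sub_nbhd : cover (S |: A) \subset S :|: nbhd_edge E S.
Proof.
have [_ [card_edge _]] := simpleE.
apply/bigcupsP => B /setU1P[-> | BA]; first exact: subsetUl.
apply: edge_sub_nbhd (subsetP AE B BA) (meets_of_card_setD _).
by rewrite A_S // card_edge // (subsetP AE).
Qed.

Lemma disjoint_cover_glue (F : {set {set T}}) :
  F \subset induced_edges E W -> [disjoint cover F & cover (S |: A)].
Proof.
move=> FW; apply: disjointWl (cover_induced_edges FW) _.
exact: disjointWr cover_setU1_sub_nbhd disW.
Qed.

Theorem self_disjoint_glue (F : {set {set T}}) :
  self_disjoint (induced_edges E W) F -> irredundant (S |: A) ->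
  self_disjoint E (F :|: (S |: A)).
Proof.
move=> [FW [irrF [F0 [F0F [match0 rest0]]]]] irrSA.
split; first by rewrite !subUset (subset_trans FW induced_edges_sub) sub1set SE AE.
split; first by apply: irredundantU => //; apply: disjoint_cover_glue.
exists (S |: F0); split.
  by apply/subsetP => B /setU1P[-> | /(subsetP F0F) BF]; rewrite !inE ?eqxx ?BF ?orbT.
split; first exact: induced_matching_setU1.
move=> B /setDP[/setUP[BF | /setU1P[-> | BA]] notB].
- have BF0 : B \notin F0 by apply: contra notB; apply: setU1r.
  have [|B' B'0 card1] := rest0 B; first by rewrite inE BF0.
  by exists B'; rewrite ?setU1r.
- by rewrite setU11 in notB.
- by exists S; rewrite ?setU11 ?A_S.
Qed.

End Gluing.

Section Fan.
Variables (T I : finType) (S : {set T}) (x : T) (z : I -> T) (f : I -> {set T}).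
Hypotheses (xS : x \in S) (xf : forall l, x \notin f l).
Hypotheses (fS : forall l, f l :\: S = [set z l]) (zinj : injective z).

Lemma fan_inj : injective f.
Proof. by move=> l m flm; apply/zinj/set1_inj; rewrite -!fS flm. Qed.

Lemma mem_fan l y : y \in f l -> y \notin S -> y = z l.
Proof. by move=> yf yS; apply/set1P; rewrite -fS inE yS yf. Qed.

Lemma fan_private l : z l \in f l /\ z l \notin S.
Proof. by have /setDP[] : z l \in f l :\: S by rewrite fS set11. Qed.

Lemma cover_fan : cover (S |: [set f l | l : I]) = S :|: [set z l | l : I].
Proof.
rewrite cover_setU1 cover_imset; apply/setP => y.
apply/setUP/setUP => -[yS | yF]; try by left.
  have [l _ yf] := bigcupP yF.
  by case: (boolP (y \in S)) => yS; [left | right; rewrite (mem_fan yf yS) imset_f].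
have [l _ ->] := imsetP yF.
by right; apply/bigcupP; exists l => //; case: (fan_private l).
Qed.

Lemma irredundant_fan : irredundant (S |: [set f l | l : I]).
Proof.
apply: irredundant_of_private => B /setU1P[-> | /imsetP[l _ ->]].
  by exists x => // B' /setU1P[-> // | /imsetP[l _ ->]]; rewrite (negbTE (xf l)).
have [zf zS] := fan_private l; exists (z l) => // B' /setU1P[-> | /imsetP[m _ ->]].
  by rewrite (negbTE zS).
by move=> /mem_fan/(_ zS)/zinj ->.
Qed.

Lemma has_type_fan : has_type (S |: [set f l | l : I]) (1 + #|I|) (#|S| + #|I|).
Proof.
have S_notin : S \notin [set f l | l : I].
  by apply/imsetP => -[l _ Sf]; move: (xf l); rewrite -Sf xS.
split; first by rewrite cardsU1 S_notin card_imset //; apply: fan_inj.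
rewrite cover_fan cardsU_disjoint ?card_imset // disjoint_sym disjoints_subset.
by apply/subsetP => _ /imsetP[l _ ->]; rewrite inE; case: (fan_private l).
Qed.

End Fan.

Theorem lemma3p4 (T : finType) (V : {set T}) (E : {set {set T}}) (d : nat)
  (hd : 2 <= d)
  (hsimple : simple_hypergraph V E) (hunif : uniform d E)
  (hint : forall S1 S2, S1 \in E -> S2 \in E -> S1 != S2 ->
            ~~ [disjoint S1 & S2] -> #|S1 :&: S2| = d.-1)
  (x : T) (hxV : x \in V) (hxs : simplicial d E x)
  (S : {set T}) (hS : S \in E) (hxS : x \in S)
  (t : nat) (z : 'I_t -> T) (hzinj : injective z)
  (hNS : nbhd_edge E S = [set z l | l : 'I_t])
  (Sl : 'I_t -> {set T}) (hSlinj : injective Sl)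
  (hSlE : forall l, Sl l \in E)
  (hSlz : forall l, Sl l :\: S = [set z l])
  (hxSl : forall l, x \notin Sl l)
  (S' : {set {set T}}) (i j : nat)
  (hS' : self_disjoint (induced_edges E (V :\: (S :|: nbhd_edge E S))) S')
  (htype : has_type S' (i - 1 - t) (j - d - t))
  (hi : 1 + t <= i) (hj : d + t <= j) :
  self_disjoint E (S' :|: (S |: [set Sl l | l : 'I_t])) /\
  has_type (S' :|: (S |: [set Sl l | l : 'I_t])) i j.
Proof.
set A := [set Sl l | l : 'I_t].
set W := V :\: (S :|: nbhd_edge E S) in hS'.
have disW : [disjoint W & S :|: nbhd_edge E S] by rewrite disjoints_subset subsetDr.
have AE : A \subset E by apply/subsetP => _ /imsetP[l _ ->]; apply: hSlE.
have A_S B : B \in A -> #|B :\: S| = 1 by move=> /imsetP[l _ ->]; rewrite hSlz cards1.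
have irrA : irredundant (S |: A) := irredundant_fan hxS hxSl hSlz hzinj.
split; first exact: (self_disjoint_glue hsimple hS disW AE A_S hS' irrA).
have dis_cover := disjoint_cover_glue hsimple disW AE A_S hS'.1.
rewrite -(subnK hi) -(subnK hj); apply: has_typeU.
- by rewrite !subnDA.
- by have := has_type_fan hxS hxSl hSlz hzinj; rewrite card_ord (hunif S hS).
- exact: disjoint_of_cover (irredundant_set0 irrA) dis_cover.
- exact: dis_cover.
Qed.
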